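(* Let $A=\mathrm{diag}(G_1,\dots,G_m,[1])\in\mathbb{R}^{n\times n}$ (where the trailing block $[1]$ may or may not be present), with $G_j=\begin{bmatrix}c_j&s_j\\-s_j&c_j\end{bmatrix}$, $c_j^2+s_j^2=1$, $s_j\neq 0$, and $0<c_1<c_2<\cdots<c_m$. Let $v_0\in\mathbb{R}^n$ be a unit norm vector with $d(A,v_0)\geq 2$ and $v_0^{(1)}\neq 0$, and run the iteration ACI($1$) below. Then $\alpha_k\to c_1$ and $\beta_k\to c_1$, and every limit vector $v_*$ of $\{v_k\}$ satisfies $v_*^{(j)}=0$ for all blocks $j\geq 2$ and $\|v_*^{(1)}\|=1$.
   Context: Block partitioning: every $v\in\mathbb{R}^n$ is written as $v=[v^{(1)};\dots;v^{(m)};v^{(m+1)}]$ with $v^{(j)}\in\mathbb{R}^2$ for $j=1,\dots,m$ (conforming with the blocks $G_j$) and $v^{(m+1)}\in\mathbb{R}$ (present only if the block $[1]$ is present). ACI($1$): for $k=0,1,2,\dots$: $\widetilde w_k=(A-\alpha_kI)v_k$ with $\alpha_k=v_k^TAv_k$; $w_k=\widetilde w_k/\|\widetilde w_k\|$; $\widetilde v_{k+1}=(A^T-\beta_kI)w_k$ with $\beta_k=w_k^TAw_k$; $v_{k+1}=\widetilde v_{k+1}/\|\widetilde v_{k+1}\|$. $d(A,v)$ is the grade of $v$ w.r.t. $A$ (degree of the monic polynomial $p$ of smallest degree with $p(A)v=0$); $\|\cdot\|$ is the Euclidean norm. *)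

From mathcomp Require Import all_boot all_order all_algebra.
From mathcomp Require Import all_classical all_reals all_analysis.
Set Implicit Arguments. Unset Strict Implicit. Unset Printing Implicit Defensive.
Import Order.TTheory GRing.Theory Num.Theory.
Local Open Scope ring_scope.

Definition mxpeval (R : comNzRingType) (n : nat) (A : 'M[R]_n) (p : {poly R})
  : 'M[R]_n := \sum_(i < size p) p`_i *: A ^+ i.

Definition annihilates (R : comNzRingType) (n : nat) (A : 'M[R]_n)
  (v : 'cV[R]_n) (p : {poly R}) : Prop :=
  p \is monic /\ mxpeval A p *m v = 0.

Lemma mxpeval_horner (R : comNzRingType) (n : nat) (A : 'M[R]_n.+1) p :
  mxpeval A p = horner_mx A p.
Proof.
rewrite /mxpeval /horner_mx /horner_morph (horner_coef_wide _ (size_poly _ _)).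
by apply: eq_bigr => i _; rewrite coef_map /= -mul_scalar_mx.
Qed.

Definition has_annihilator_deg (R : comNzRingType) (n : nat) (A : 'M[R]_n)
  (v : 'cV[R]_n) : pred nat :=
  fun d => `[< exists p, annihilates A v p /\ size p = d.+1 >].

Lemma annihilator_exists (R : comNzRingType) (n : nat) (A : 'M[R]_n)
  (v : 'cV[R]_n) : exists d, has_annihilator_deg A v d.
Proof.
suff [d Hd] : exists d, exists p, annihilates A v p /\ size p = d.+1.
  by exists d; apply/asboolP.
case: n A v => [|n] A v.
  exists 0%N, 1; split; last by rewrite size_poly1.
  by split; [exact: monic1 | apply/matrixP => [] [] ].
exists n.+1, (char_poly A); split; last by rewrite size_char_poly.
split; first exact: char_poly_monic.
by rewrite mxpeval_horner Cayley_Hamilton mul0mx.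
Qed.

Definition grade (R : comNzRingType) (n : nat) (A : 'M[R]_n) (v : 'cV[R]_n)
  : nat :=
  ex_minn (annihilator_exists A v).

Definition vnorm (R : rcfType) (n : nat) (v : 'cV[R]_n) : R :=
  Num.sqrt (\sum_(i < n) v i 0 ^+ 2).

(* Block-diagonal A = diag(G_1,...,G_m,[1]) of size 2m+b (b = presence of [1]).
   Blocks are 0-indexed here: block j (j < m) occupies indices 2j, 2j+1 and is
   G_{j+1} = [[c j, s j]; [- s j, c j]]; index 2m (if b) carries the block [1]. *)
Definition blockA (R : comNzRingType) (m : nat) (b : bool) (c s : nat -> R)
  : 'M[R]_(2 * m + b) :=
  \matrix_(i, k)
    if (i./2 == k./2) && (i./2 < m)%N then
      (if i == k then c i./2 else if ~~ odd i then s i./2 else - s i./2)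
    else (if i == k then 1 else 0).

Definition qform (R : comNzRingType) (n : nat) (x : 'cV[R]_n) (B : 'M[R]_n)
  (y : 'cV[R]_n) : R := (x^T *m B *m y) 0 0.

Definition aci_w (R : rcfType) (n : nat) (A : 'M[R]_n) (v : 'cV[R]_n)
  : 'cV[R]_n :=
  let wt := (A - (qform v A v)%:M) *m v in (vnorm wt)^-1 *: wt.

Definition aci_next (R : rcfType) (n : nat) (A : 'M[R]_n) (v : 'cV[R]_n)
  : 'cV[R]_n :=
  let w := aci_w A v in
  let vt := (A^T - (qform w A w)%:M) *m w in (vnorm vt)^-1 *: vt.

Fixpoint aci_v (R : rcfType) (n : nat) (A : 'M[R]_n) (v0 : 'cV[R]_n) (k : nat)
  : 'cV[R]_n :=
  if k is k'.+1 then aci_next A (aci_v A v0 k') else v0.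

Definition aci_alpha (R : rcfType) n (A : 'M[R]_n) v0 k : R :=
  let v := aci_v A v0 k in qform v A v.

Definition aci_beta (R : rcfType) n (A : 'M[R]_n) v0 k : R :=
  let w := aci_w A (aci_v A v0 k) in qform w A w.

(* vstar is a limit (accumulation) point of the sequence u: every
   neighbourhood of vstar contains u k for infinitely many k.  Nbhds are taken
   entrywise (the product topology on R^n). *)
Definition seq_accum_point (R : realType) (n : nat) (u : nat -> 'cV[R]_n)
  (vstar : 'cV[R]_n) : Prop :=
  forall eps : R, 0 < eps -> forall N : nat, exists2 k : nat, (N <= k)%N &
    forall i : 'I_n, `|u k i 0 - vstar i 0| < eps.

From mathcomp Require Import all_boot all_order all_algebra.
From mathcomp Require Import all_classical all_reals all_analysis.
From mathcomp Require Import ring lra zify.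
Import Order.TTheory GRing.Theory Num.Theory numFieldNormedType.Exports.
Local Open Scope classical_set_scope.
Local Open Scope ring_scope.
Set Implicit Arguments. Unset Strict Implicit. Unset Printing Implicit Defensive.

(* Let [p_j] be the squared norm of block [j] of the current vector, the
   trailing [[1]] block counting as a block with cosine [1].  Since [G_j - x I]
   is a multiple of a rotation, a shift-and-normalise half-step of ACI(1), with
   [A] or with [A^T], replaces [p_j] by [|e^(i theta_j) - x|^2 p_j], renormalised,
   where [x = sum_j c_j p_j] is the current Rayleigh quotient.  As [x] lies in
   [[c_1, 1]], every block [j >= 2] gains at most [1 - (c_2 - c_1) c_1 < 1] times
   what block 1 gains, so the ratio [sum_(j >= 2) p_j / p_1] decays geometrically.
   Both [alpha_k - c_1] and [beta_k - c_1] lie between [0] and that ratio, and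
   the mass of [v_k] concentrates on block 1. *)

Section WeightVectors.
Variables (R : realFieldType) (m : nat).
Implicit Types p : nat -> R.

Definition weight_vector p : Prop :=
  [/\ forall j, 0 <= p j, \sum_(j < m.+1) p j = 1 & 0 < p 0%N].

Definition tail_ratio p : R := (\sum_(j < m) p j.+1) / p 0%N.

Lemma weight_vector_tail p :
  weight_vector p -> 1 - p 0%N = \sum_(j < m) p j.+1.
Proof. by case=> _ <- _; rewrite big_ord_recl addrC addKr. Qed.

Lemma weight_tail_le_ratio p :
  weight_vector p -> \sum_(j < m) p j.+1 <= tail_ratio p.
Proof.
move=> pW; have [p_ge0 _ p0_gt0] := pW; have tail := weight_vector_tail pW.
have p0_le1 : p 0%N <= 1 by rewrite -subr_ge0 tail sumr_ge0.
by rewrite /tail_ratio ler_pdivlMr // ler_piMr // sumr_ge0.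
Qed.

Lemma tail_ratio_ge0 p : weight_vector p -> 0 <= tail_ratio p.
Proof.
move=> pW; apply: le_trans (weight_tail_le_ratio pW).
by case: pW => p_ge0 _ _; rewrite sumr_ge0.
Qed.

End WeightVectors.

(* [g j] stands for the cosine of block [j]; block [0] is the paper's first
   block. *)
Definition cosine_gap (R : realFieldType) (g : nat -> R) (c0 g1 : R) : Prop :=
  [/\ 0 < c0, c0 < g1, g 0%N = c0, forall j, g j <= 1
    & forall j, (0 < j)%N -> g1 <= g j].

Section ShiftedWeights.
Variables (R : realFieldType) (m : nat) (g : nat -> R) (c0 g1 : R).
Hypothesis gP : cosine_gap g c0 g1.
Implicit Types p : nat -> R.

Let c0_gt0 : 0 < c0. Proof. by case: gP. Qed.
Let c0_lt_g1 : c0 < g1. Proof. by case: gP. Qed.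
Let g0 : g 0%N = c0. Proof. by case: gP. Qed.
Let g_le1 j : g j <= 1. Proof. by case: gP. Qed.
Let g_gap j : (0 < j)%N -> g1 <= g j. Proof. by case: gP => _ _ _ _; apply. Qed.

Let g1_le1 : g1 <= 1. Proof. exact: le_trans (g_gap (ltn0Sn 0)) (g_le1 _). Qed.

Let g_ge_c0 j : c0 <= g j.
Proof. by case: j => [|j]; rewrite ?g0 // (le_trans (ltW c0_lt_g1)) ?g_gap. Qed.

(* [shift_gain j x = |e^(i theta_j) - x|^2], the factor by which [G_j - x I]
   scales squared norms. *)

Definition shift_gain j (x : R) : R := 1 - 2 * g j * x + x ^+ 2.

Definition rayleigh p : R := \sum_(j < m.+1) g j * p j.

Definition shift_weights x p j : R :=
  shift_gain j x * p j / \sum_(k < m.+1) shift_gain k x * p k.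

Definition contraction : R := 1 - (g1 - c0) * c0.

Lemma contraction_ge0 : 0 <= contraction.
Proof.
rewrite /contraction subr_ge0 -[1]mulr1 ler_pM ?subr_ge0 ?ltW //.
  by rewrite ltrBlDr (le_lt_trans g1_le1) ?ltrDl.
exact: lt_le_trans c0_lt_g1 g1_le1.
Qed.

Lemma contraction_lt1 : contraction < 1.
Proof. by rewrite /contraction gtrBl mulr_gt0 // subr_gt0. Qed.

Lemma shift_gain_sqr j x : shift_gain j x = (x - g j) ^+ 2 + (1 - g j ^+ 2).
Proof. by rewrite /shift_gain; ring. Qed.

Lemma shift_gain_ge0 j x : 0 <= shift_gain j x.
Proof.
rewrite shift_gain_sqr addr_ge0 ?sqr_ge0 // subr_ge0 exprn_ile1 //.
exact: le_trans (ltW c0_gt0) (g_ge_c0 j).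
Qed.

Lemma shift_gain_head_gt0 x : 0 < shift_gain 0 x.
Proof.
rewrite shift_gain_sqr ltr_wpDl ?sqr_ge0 // subr_gt0 g0 exprn_ilt1 ?ltW //.
exact: lt_le_trans c0_lt_g1 g1_le1.
Qed.

Lemma shift_gain_tail_le j x : c0 <= x <= 1 -> (0 < j)%N ->
  shift_gain j x <= contraction * shift_gain 0 x.
Proof.
move=> /andP[x_ge x_le1] j_gt0; have x_gt0 := lt_le_trans c0_gt0 x_ge.
have gap : (g1 - c0) * c0 <= (g j - c0) * x.
  apply: ler_pM => //; [by rewrite subr_ge0 ltW | exact: ltW |].
  by rewrite lerD2r g_gap.
have head_le2 : shift_gain 0 x <= 2.
  have c0x_gt0 := mulr_gt0 c0_gt0 x_gt0.
  have x2_le1 := exprn_ile1 2 (ltW x_gt0) x_le1.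
  rewrite /shift_gain g0; lra.
have gap_ge0 : 0 <= (g1 - c0) * c0 by rewrite mulr_ge0 ?subr_ge0 ?ltW.
rewrite -subr_ge0.
have -> : contraction * shift_gain 0 x - shift_gain j x =
    2 * ((g j - c0) * x) - (g1 - c0) * c0 * shift_gain 0 x.
  by rewrite /contraction /shift_gain g0; ring.
have gap_head := ler_wpM2l gap_ge0 head_le2; lra.
Qed.

Lemma rayleigh_sub_bounds p :
  weight_vector m p -> 0 <= rayleigh p - c0 <= tail_ratio m p.
Proof.
move=> pW; have [p_ge0 p_sum _] := pW.
have -> : rayleigh p - c0 = \sum_(j < m.+1) (g j - c0) * p j.
  rewrite /rayleigh -[X in _ - X]mulr1 -p_sum mulr_sumr -sumrB.
  by apply: eq_bigr => j _; rewrite mulrBl.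
rewrite big_ord_recl g0 subrr mul0r add0r /=.
apply/andP; split; first by rewrite sumr_ge0 // => j _; rewrite mulr_ge0 ?subr_ge0.
apply: le_trans (weight_tail_le_ratio pW); apply: ler_sum => j _.
by rewrite ler_piMl // lerBlDr (le_trans (g_le1 _)) // lerDl ltW.
Qed.

Lemma rayleigh_le1 p : weight_vector m p -> rayleigh p <= 1.
Proof.
case=> p_ge0 p_sum _; rewrite -p_sum /rayleigh ler_sum // => j _.
by rewrite ler_piMl.
Qed.

Lemma shift_total_gt0 x p :
  weight_vector m p -> 0 < \sum_(k < m.+1) shift_gain k x * p k.
Proof.
case=> p_ge0 _ p0_gt0; rewrite big_ord_recl ltr_wpDr ?mulr_gt0 ?shift_gain_head_gt0 //.
by rewrite sumr_ge0 // => k _; rewrite mulr_ge0 ?shift_gain_ge0.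
Qed.

Lemma shift_weights_weight_vector p : weight_vector m p ->
  weight_vector m (shift_weights (rayleigh p) p).
Proof.
move=> pW; have [p_ge0 _ p0_gt0] := pW; have N_gt0 := shift_total_gt0 (rayleigh p) pW.
split=> [j | | ]; rewrite /shift_weights.
- by rewrite divr_ge0 ?mulr_ge0 ?shift_gain_ge0 ?(ltW N_gt0).
- by rewrite -mulr_suml divff // gt_eqF.
- by rewrite divr_gt0 ?mulr_gt0 ?shift_gain_head_gt0.
Qed.

Lemma tail_ratio_shift_weights p : weight_vector m p ->
  tail_ratio m (shift_weights (rayleigh p) p) <= contraction * tail_ratio m p.
Proof.
move=> pW; have [p_ge0 _ p0_gt0] := pW; set x := rayleigh p.
have x_range : c0 <= x <= 1.
  have /andP[x_ge _] := rayleigh_sub_bounds pW.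
  by rewrite -subr_ge0 x_ge rayleigh_le1.
have N_gt0 := shift_total_gt0 x pW; have F0_gt0 := shift_gain_head_gt0 x.
have -> : tail_ratio m (shift_weights x p) =
    (\sum_(j < m) shift_gain j.+1 x * p j.+1) / (shift_gain 0 x * p 0%N).
  rewrite /tail_ratio /shift_weights -mulr_suml; field.
  by rewrite !gt_eqF.
have -> : contraction * tail_ratio m p =
    (\sum_(j < m) contraction * shift_gain 0 x * p j.+1) / (shift_gain 0 x * p 0%N).
  rewrite /tail_ratio -mulr_sumr; field.
  by rewrite !gt_eqF.
rewrite ler_wpM2r ?invr_ge0 ?(ltW (mulr_gt0 F0_gt0 p0_gt0)) //.
apply: ler_sum => j _.
by rewrite ler_wpM2r // shift_gain_tail_le.
Qed.

End ShiftedWeights.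

Section Coordinates.
Variables (R : comNzRingType) (n : nat).
Implicit Types v : 'cV[R]_n.

Definition vcoef v k : R := if insub k is Some i then v i 0 else 0.

Lemma vcoefE v (i : 'I_n) : vcoef v i = v i 0.
Proof. by rewrite /vcoef valK. Qed.

Lemma vcoef_out v k : (n <= k)%N -> vcoef v k = 0.
Proof. by move=> k_ge; rewrite /vcoef insubF // ltnNge k_ge. Qed.

Lemma vcoefZ v a k : vcoef (a *: v) k = a * vcoef v k.
Proof. by rewrite /vcoef; case: insubP => [i _ _|_]; rewrite ?mxE ?mulr0. Qed.

Definition block_sqnorm v j : R := vcoef v j.*2 ^+ 2 + vcoef v j.*2.+1 ^+ 2.

Lemma block_sqnormZ v a j : block_sqnorm (a *: v) j = a ^+ 2 * block_sqnorm v j.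
Proof. by rewrite /block_sqnorm !vcoefZ; ring. Qed.

End Coordinates.

Lemma sum_ord_double (R : nmodType) N (G : nat -> R) :
  \sum_(i < N.*2) G i = \sum_(j < N) (G j.*2 + G j.*2.+1).
Proof.
elim: N => [|N IH]; first by rewrite !big_ord0.
by rewrite doubleS !big_ord_recr /= IH addrA.
Qed.

Lemma sum_ord_pairs (R : nmodType) m (b : bool) (G : nat -> R) :
  (forall k, (2 * m + b <= k)%N -> G k = 0) ->
  \sum_(i < 2 * m + b) G i = \sum_(j < m.+1) (G j.*2 + G j.*2.+1).
Proof.
move=> G_out; have n_le : (2 * m + b <= (m.+1).*2)%N.
  by move: (leq_b1 b); rewrite -mul2n; lia.
rewrite -sum_ord_double (big_ord_widen _ G n_le) big_mkcond /=.
by apply: eq_bigr => i _; case: ltnP => // /G_out ->.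
Qed.

Section BlockRotation.
Variables (R : comNzRingType) (m : nat) (c s : nat -> R).

Definition blockA_coef (i k : nat) : R :=
  if (i./2 == k./2) && (i./2 < m)%N then
    (if i == k then c i./2 else if ~~ odd i then s i./2 else - s i./2)
  else (if i == k then 1 else 0).

Lemma blockA_coefE (b : bool) (i k : 'I_(2 * m + b)) :
  blockA m b c s i k = blockA_coef i k.
Proof. by rewrite mxE. Qed.

Definition block_cos j : R := if (j < m)%N then c j else 1.

Definition shift_coef (x : R) (f : nat -> R) (i : nat) : R :=
  let j := i./2 in
  if (j < m)%N then
    (if odd i then - s j * f j.*2 + (c j - x) * f j.*2.+1
     else (c j - x) * f j.*2 + s j * f j.*2.+1)
  else (1 - x) * f i.

Lemma half_doubleS j : (j.*2.+1)./2 = j.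
Proof. by rewrite -[j.*2.+1]/(true + j.*2)%N half_bit_double. Qed.

Lemma blockA_coef_off i j : j != i./2 ->
  blockA_coef i j.*2 = 0 /\ blockA_coef i j.*2.+1 = 0.
Proof.
move=> j_neq.
have [i_neq1 i_neq2] : (i == j.*2) = false /\ (i == j.*2.+1) = false.
  by split; apply/negbTE; apply: contra j_neq => /eqP ->;
    rewrite ?half_double ?half_doubleS.
by rewrite /blockA_coef half_doubleS half_double i_neq1 i_neq2 eq_sym (negbTE j_neq).
Qed.

Lemma blockA_coef_block x (f : nat -> R) i :
  blockA_coef i (i./2).*2 * f (i./2).*2 +
  blockA_coef i (i./2).*2.+1 * f (i./2).*2.+1 - x * f i = shift_coef x f i.
Proof.
rewrite /blockA_coef /shift_coef; move: (odd_double_half i).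
set o := odd i; set j := i./2; clearbody o j => <-.
have [neq1 neq2] : (j.*2.+1 == j.*2) = false /\ (j.*2 == j.*2.+1) = false.
  by split; elim: j.
rewrite half_double half_doubleS eqxx.
by case: o; rewrite /= ?add1n ?add0n ?neq1 ?neq2 eqxx; case: ltnP => _ /=; ring.
Qed.

Lemma vcoef_blockA_shift (b : bool) x (v : 'cV[R]_(2 * m + b)) :
  vcoef ((blockA m b c s - x%:M) *m v) =1 shift_coef x (vcoef v).
Proof.
move=> k; case: (ltnP k (2 * m + b)) => [k_lt | k_ge]; last first.
  rewrite vcoef_out // /shift_coef ifN ?vcoef_out ?mulr0 //.
  by rewrite -leqNgt geq_half_double (leq_trans _ k_ge) // -mul2n leq_addr.
rewrite -[k]/(nat_of_ord (Ordinal k_lt)) vcoefE mulmxBl mul_scalar_mx !mxE.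
rewrite -blockA_coef_block -vcoefE; congr (_ - _).
under eq_bigr => i _ do rewrite blockA_coefE -vcoefE.
rewrite (sum_ord_pairs (G := fun i => blockA_coef k i * vcoef v i)); last first.
  by move=> i i_ge; rewrite vcoef_out ?mulr0.
have k2_lt : (k./2 < m.+1)%N.
  by rewrite ltnS leq_half_double; move: k_lt (leq_b1 b); rewrite -mul2n; lia.
rewrite (bigD1 (Ordinal k2_lt)) //= big1 ?addr0 // => j.
rewrite -val_eqE /= => /blockA_coef_off [-> ->].
by rewrite !mul0r addr0.
Qed.

End BlockRotation.

Definition shift_normalize (R : rcfType) n (A : 'M[R]_n) (x : R) (v : 'cV[R]_n)
  : 'cV[R]_n := let u := (A - x%:M) *m v in (vnorm u)^-1 *: u.

Lemma rotation_shift_sqr (R : comNzRingType) (c s x a a' : R) :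
  c ^+ 2 + s ^+ 2 = 1 ->
  ((c - x) * a + s * a') ^+ 2 + (- s * a + (c - x) * a') ^+ 2 =
  (1 - 2 * c * x + x ^+ 2) * (a ^+ 2 + a' ^+ 2).
Proof.
move=> cs1; apply/eqP; rewrite -subr_eq0; apply/eqP.
transitivity ((c ^+ 2 + s ^+ 2 - 1) * (a ^+ 2 + a' ^+ 2)); first ring.
by rewrite cs1 subrr mul0r.
Qed.

Section BlockWeights.
Variables (R : rcfType) (m : nat) (b : bool) (c s : nat -> R).
Hypothesis cs1 : forall j, (j < m)%N -> c j ^+ 2 + s j ^+ 2 = 1.
Local Notation n := (2 * m + b)%N.
Local Notation A := (blockA m b c s).
Local Notation g := (block_cos m c).
Implicit Types v : 'cV[R]_n.

Lemma sum_sqr_blocks v :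
  \sum_(i < n) v i 0 ^+ 2 = \sum_(j < m.+1) block_sqnorm v j.
Proof.
under eq_bigr => i _ do rewrite -vcoefE.
rewrite (sum_ord_pairs (G := fun i => vcoef v i ^+ 2)) // => k /vcoef_out ->.
by rewrite expr0n.
Qed.

Lemma vnorm_sqr_blocks v : vnorm v ^+ 2 = \sum_(j < m.+1) block_sqnorm v j.
Proof.
by rewrite -sum_sqr_blocks /vnorm sqr_sqrtr // sumr_ge0 // => i _; apply: sqr_ge0.
Qed.

Lemma block_sqnorm_shift x v j :
  block_sqnorm ((A - x%:M) *m v) j = shift_gain g j x * block_sqnorm v j.
Proof.
rewrite /block_sqnorm /shift_gain /block_cos !vcoef_blockA_shift /shift_coef.
rewrite half_double half_doubleS /= odd_double /=.
by case: ltnP => [/cs1 /rotation_shift_sqr -> | _] //; ring.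
Qed.

Lemma qform_blockA v : qform v A v = rayleigh m g (block_sqnorm v).
Proof.
have Av i : (A *m v) i 0 = shift_coef m c s 0 (vcoef v) i.
  by rewrite -vcoef_blockA_shift vcoefE mulmxBl mul_scalar_mx scale0r subr0.
rewrite /qform -mulmxA mxE.
under eq_bigr => k _ do rewrite Av mxE -vcoefE.
rewrite (sum_ord_pairs
  (G := fun k => vcoef v k * shift_coef m c s 0 (vcoef v) k)); last first.
  by move=> k /vcoef_out ->; rewrite mul0r.
apply: eq_bigr => j _; rewrite /shift_coef /block_sqnorm /block_cos.
by rewrite half_double half_doubleS /= odd_double /=; case: ltnP => _; ring.
Qed.

Lemma block_sqnorm_shift_normalize x v :
  block_sqnorm (shift_normalize A x v) = shift_weights m g x (block_sqnorm v).
Proof.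
apply/funext => j; rewrite /shift_normalize block_sqnormZ exprVn vnorm_sqr_blocks.
by under eq_bigr => k _ do rewrite block_sqnorm_shift; rewrite block_sqnorm_shift mulrC.
Qed.

Lemma sum_sqr_head v : \sum_(i < n | i./2 == 0%N) v i 0 ^+ 2 = block_sqnorm v 0.
Proof.
rewrite big_mkcond /=; under eq_bigr => i _ do rewrite -vcoefE.
rewrite (sum_ord_pairs (G := fun i => if i./2 == 0%N then vcoef v i ^+ 2 else 0)).
  rewrite big_ord_recl big1 ?addr0 // => j _.
  by rewrite lift0 half_double half_doubleS addr0.
by move=> k /vcoef_out ->; case: ifP => //; rewrite expr0n.
Qed.

End BlockWeights.

Lemma trmx_blockA (R : comNzRingType) m (b : bool) (c s : nat -> R) :
  (blockA m b c s)^T = blockA m b c (fun j => - s j).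
Proof.
apply/matrixP => i k; rewrite !mxE [k == i]eq_sym [k./2 == _]eq_sym.
case: (i =P k) => [-> // | /eqP i_neq].
case: (i./2 =P k./2) => [half_eq | _] //=; rewrite half_eq; case: ltnP => //= _.
have : odd i != odd k.
  apply: contra i_neq => /eqP odd_eq; apply/eqP/val_inj => /=.
  by rewrite -(odd_double_half i) -(odd_double_half k) odd_eq half_eq.
by case: (odd i) (odd k) => [] [] //= _; rewrite opprK.
Qed.

Lemma sqr_le_sum_sqr (R : realDomainType) n (v : 'cV[R]_n) (P : pred 'I_n) i :
  P i -> v i 0 ^+ 2 <= \sum_(k | P k) v k 0 ^+ 2.
Proof.
by move=> Pi; rewrite (bigD1 i) //= lerDl sumr_ge0 // => k _; apply: sqr_ge0.
Qed.

Lemma sqr_sub_le (R : realDomainType) (a b d : R) :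
  `|a - b| < d -> d <= 1 -> `|a ^+ 2 - b ^+ 2| <= d * (2 * `|b| + 1).
Proof.
move=> ab_lt d_le1.
have -> : a ^+ 2 - b ^+ 2 = (a - b) * (a - b + 2 * b) by ring.
rewrite normrM ler_pM ?normr_ge0 ?ltW //.
have := ler_normD (a - b) (2 * b); rewrite normrM ger0_norm // => tri; lra.
Qed.

Lemma accum_point_sum_sqr (R : realType) n (u : nat -> 'cV[R]_n) vstar
    (P : pred 'I_n) (L : R) :
  seq_accum_point u vstar ->
  (fun k => \sum_(i | P i) u k i 0 ^+ 2) @ \oo --> L ->
  \sum_(i | P i) vstar i 0 ^+ 2 = L.
Proof.
move=> acc /cvgrPdist_lt f_cvg.
set S := \sum_(i | P i) vstar i 0 ^+ 2.
set K := \sum_(i | P i) (2 * `|vstar i 0| + 1).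
have K_ge0 : 0 <= K by rewrite sumr_ge0 // => i _; rewrite addr_ge0 ?mulr_ge0.
suff close eps : 0 < eps -> `|S - L| < eps.
  by case: (eqVneq S L) => //; rewrite -subr_eq0 -normr_gt0 => /close; rewrite ltxx.
move=> eps_gt0; have eps2_gt0 : 0 < eps / 2 by rewrite divr_gt0.
pose d := Num.min 1 (eps / 2 / (K + 1)).
have K1_gt0 : 0 < K + 1 by rewrite ltr_wpDl.
have d_gt0 : 0 < d by rewrite lt_min ltr01 divr_gt0.
have d_le1 : d <= 1 by rewrite ge_min lexx.
have d_le : d <= eps / 2 / (K + 1) by rewrite ge_min lexx orbT.
have [N _ near_L] := f_cvg _ eps2_gt0.
have [k k_ge close_k] := acc d d_gt0 N.
have S_close : `|S - \sum_(i | P i) u k i 0 ^+ 2| <= d * K.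
  rewrite /S /K -sumrB mulr_sumr (le_trans (ler_norm_sum _ _ _)) //.
  by apply: ler_sum => i _; rewrite distrC sqr_sub_le.
have dK_le : d * K <= eps / 2.
  rewrite (le_trans (ler_wpM2r K_ge0 d_le)) // mulrAC ler_pdivrMr //.
  by rewrite ler_pM2l // lerDl.
have := near_L k k_ge; rewrite /= distrC => fk_close.
have := ler_distD (\sum_(i | P i) u k i 0 ^+ 2) S L; lra.
Qed.

Section ACI.
Variables (R : realType) (m : nat) (b : bool) (c s : nat -> R)
  (v0 : 'cV[R]_(2 * m + b)).
Hypotheses (m_gt0 : (0 < m)%N)
  (cs1 : forall j, (j < m)%N -> c j ^+ 2 + s j ^+ 2 = 1)
  (s_neq0 : forall j, (j < m)%N -> s j != 0)
  (c0_gt0 : 0 < c 0%N)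
  (c_incr : forall j, (j.+1 < m)%N -> c j < c j.+1)
  (v0_unit : vnorm v0 = 1)
  (v0_head : exists i : 'I_(2 * m + b), (i./2 == 0)%N && (v0 i 0 != 0)).

Local Notation n := (2 * m + b)%N.
Local Notation A := (blockA m b c s).
Local Notation g := (block_cos m c).
Local Notation rho := (contraction (c 0%N) (g 1%N)).
Local Notation ratio v := (tail_ratio m (block_sqnorm v)).

Let c_le1 j : (j < m)%N -> c j <= 1.
Proof. by move=> /cs1 cs1j; have := sqr_ge0 (s j); nra. Qed.

Let c_le i j : (i <= j)%N -> (j < m)%N -> c i <= c j.
Proof.
elim: j => [|j IH]; first by rewrite leqn0 => /eqP ->.
rewrite leq_eqVlt => /predU1P[-> // | /IH c_le_j j_lt].
exact: le_trans (c_le_j (ltnW j_lt)) (ltW (c_incr j_lt)).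
Qed.

Let gP : cosine_gap g (c 0%N) (g 1%N).
Proof.
split=> [//||| j | j j_gt0]; rewrite /block_cos ?m_gt0 //.
- case: ltnP => [/c_incr // | _].
  have s0_gt0 : 0 < s 0%N ^+ 2 by rewrite lt_def sqrf_eq0 s_neq0 ?sqr_ge0.
  by have := cs1 m_gt0; nra.
- by case: ltnP => // /c_le1.
- case: (ltnP j m) => [j_lt | _]; first by rewrite (leq_ltn_trans j_gt0 j_lt) c_le.
  by case: ltnP => // /c_le1.
Qed.

Let rho_ge0 : 0 <= rho. Proof. exact: contraction_ge0 gP. Qed.

Let rho_lt1 : rho < 1. Proof. exact: contraction_lt1 gP. Qed.

Lemma shift_normalize_weights s' x v :
  (forall j, (j < m)%N -> c j ^+ 2 + s' j ^+ 2 = 1) ->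
  weight_vector m (block_sqnorm v) -> x = rayleigh m g (block_sqnorm v) ->
  let v' := shift_normalize (blockA m b c s') x v in
  weight_vector m (block_sqnorm v') /\ ratio v' <= rho * ratio v.
Proof.
move=> cs1' vW -> v'; rewrite /v' (block_sqnorm_shift_normalize cs1').
split; first exact: (shift_weights_weight_vector gP vW).
exact: (tail_ratio_shift_weights gP vW).
Qed.

Lemma aci_step_weights v : weight_vector m (block_sqnorm v) ->
  let w := aci_w A v in
  [/\ weight_vector m (block_sqnorm w), ratio w <= rho * ratio v,
      weight_vector m (block_sqnorm (aci_next A v)) &
      ratio (aci_next A v) <= rho * ratio w].
Proof.
move=> vW w.
have [wW w_ratio] := shift_normalize_weights cs1 vW (qform_blockA c s v).
have csN j : (j < m)%N -> c j ^+ 2 + (- s j) ^+ 2 = 1 by rewrite sqrrN => /cs1.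
have -> : aci_next A v =
    shift_normalize (blockA m b c (fun j => - s j)) (qform w A w) w.
  by rewrite /aci_next trmx_blockA.
by have [] := shift_normalize_weights csN wW (qform_blockA c s w).
Qed.

Lemma v0_weight_vector : weight_vector m (block_sqnorm v0).
Proof.
split=> [j | | ].
- by rewrite addr_ge0 ?sqr_ge0.
- by rewrite -vnorm_sqr_blocks v0_unit expr1n.
- have [i /andP[i_head v0i_neq0]] := v0_head.
  rewrite -sum_sqr_head (lt_le_trans _ (sqr_le_sum_sqr v0
    (P := fun i : 'I_n => i./2 == 0%N) i_head)) //.
  by rewrite lt_def sqrf_eq0 v0i_neq0 sqr_ge0.
Qed.

Lemma aci_weights k : weight_vector m (block_sqnorm (aci_v A v0 k)) /\
  ratio (aci_v A v0 k) <= ratio v0 * (rho ^+ 2) ^+ k.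
Proof.
elim: k => [|k [vW v_ratio]].
  by rewrite expr0 mulr1; split; [exact: v0_weight_vector |].
have [_ w_ratio uW u_ratio] := aci_step_weights vW; split=> //=.
have -> : ratio v0 * (rho ^+ 2) ^+ k.+1 =
    rho * (rho * (ratio v0 * (rho ^+ 2) ^+ k)).
  by rewrite exprS expr2 mulrCA -mulrA.
apply: le_trans u_ratio (ler_wpM2l rho_ge0 _).
exact: le_trans w_ratio (ler_wpM2l rho_ge0 v_ratio).
Qed.

Lemma aci_ratio_cvg0 : (fun k => ratio (aci_v A v0 k)) @ \oo --> (0 : R).
Proof.
apply: (@squeeze_cvgr _ _ _ _ (cst 0) (geometric (ratio v0) (rho ^+ 2))).
- apply: nearW => k; have [vW v_ratio] := aci_weights k.
  by rewrite tail_ratio_ge0.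
- exact: cvg_cst.
- by apply: cvg_geometric; rewrite ger0_norm ?sqr_ge0 // exprn_ilt1.
Qed.

Lemma cvg_aci_ratio_squeeze (u : R^nat) (l : R) :
  (forall k, l - ratio (aci_v A v0 k) <= u k <= l + ratio (aci_v A v0 k)) ->
  u @ \oo --> l.
Proof.
move=> u_bounds; apply: (@squeeze_cvgr _ _ _ _
  (fun k => l - ratio (aci_v A v0 k)) (fun k => l + ratio (aci_v A v0 k))).
- exact: nearW.
- rewrite -[X in _ --> X]subr0.
  by apply: cvgB; [exact: cvg_cst | exact: aci_ratio_cvg0].
- rewrite -[X in _ --> X]addr0.
  by apply: cvgD; [exact: cvg_cst | exact: aci_ratio_cvg0].
Qed.

Lemma aci_alpha_bounds k :
  c 0%N - ratio (aci_v A v0 k) <= aci_alpha A v0 k <= c 0%N + ratio (aci_v A v0 k).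
Proof.
have [vW _] := aci_weights k; have r_ge0 := tail_ratio_ge0 vW.
have /andP[lo hi] := rayleigh_sub_bounds gP vW.
by rewrite /aci_alpha /= qform_blockA; apply/andP; split; lra.
Qed.

Lemma aci_beta_bounds k :
  c 0%N - ratio (aci_v A v0 k) <= aci_beta A v0 k <= c 0%N + ratio (aci_v A v0 k).
Proof.
have [vW _] := aci_weights k; have [wW w_ratio _ _] := aci_step_weights vW.
have r_ge0 := tail_ratio_ge0 vW.
have rho_r := ler_wpM2r r_ge0 (ltW rho_lt1); rewrite mul1r in rho_r.
have /andP[lo hi] := rayleigh_sub_bounds gP wW.
by rewrite /aci_beta /= qform_blockA; apply/andP; split; lra.
Qed.

Lemma aci_head_bounds k :
  1 - ratio (aci_v A v0 k) <= \sum_(i < n | i./2 == 0%N) aci_v A v0 k i 0 ^+ 2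
    <= 1 + ratio (aci_v A v0 k).
Proof.
have [vW _] := aci_weights k; have [p_ge0 _ _] := vW.
have tail_eq := weight_vector_tail vW; have tail_le := weight_tail_le_ratio vW.
have tail_ge0 : 0 <= \sum_(j < m) block_sqnorm (aci_v A v0 k) j.+1.
  by rewrite sumr_ge0.
by rewrite sum_sqr_head; apply/andP; split; lra.
Qed.

Lemma aci_tail_coef_bounds k (i : 'I_n) : i./2 != 0%N ->
  0 - ratio (aci_v A v0 k) <= aci_v A v0 k i 0 ^+ 2 <= 0 + ratio (aci_v A v0 k).
Proof.
move=> i_tail; set v := aci_v A v0 k; have [vW _] := aci_weights k.
have [_ sum1 _] := vW; have tail_eq := weight_vector_tail vW.
have tail_le := weight_tail_le_ratio vW; have r_ge0 := tail_ratio_ge0 vW.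
have coef_ge0 := sqr_ge0 (v i 0).
have coef_le := sqr_le_sum_sqr v (P := fun i : 'I_n => i./2 != 0%N) i_tail.
have split_eq := sum_sqr_blocks v.
rewrite (bigID (fun i : 'I_n => i./2 == 0%N)) /= sum_sqr_head sum1 in split_eq.
by apply/andP; split; lra.
Qed.

Lemma aci_alpha_cvg : (aci_alpha A v0 : R^nat) @ \oo --> (c 0%N : R).
Proof. exact: cvg_aci_ratio_squeeze aci_alpha_bounds. Qed.

Lemma aci_beta_cvg : (aci_beta A v0 : R^nat) @ \oo --> (c 0%N : R).
Proof. exact: cvg_aci_ratio_squeeze aci_beta_bounds. Qed.

Lemma aci_accum_point vstar : seq_accum_point (aci_v A v0) vstar ->
  (forall i : 'I_n, (i./2 != 0)%N -> vstar i 0 = 0) /\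
  Num.sqrt (\sum_(i < n | (i./2 == 0)%N) vstar i 0 ^+ 2) = 1.
Proof.
move=> acc; split=> [i i_tail | ].
  suff : \sum_(j | j == i) vstar j 0 ^+ 2 = 0.
    by rewrite big_pred1_eq => /eqP; rewrite sqrf_eq0 => /eqP.
  apply: (accum_point_sum_sqr acc); apply: cvg_aci_ratio_squeeze => k.
  by rewrite big_pred1_eq aci_tail_coef_bounds.
rewrite (accum_point_sum_sqr acc (L := 1)) ?sqrtr1 //.
exact: cvg_aci_ratio_squeeze aci_head_bounds.
Qed.

End ACI.

Theorem lemma4p5 (R : realType) (m : nat) (b : bool) (c s : nat -> R)
  (v0 : 'cV[R]_(2 * m + b)) :
  (0 < m)%N ->
  (forall j, (j < m)%N -> c j ^+ 2 + s j ^+ 2 = 1) ->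
  (forall j, (j < m)%N -> s j != 0) ->
  0 < c 0%N ->
  (forall j, (j.+1 < m)%N -> c j < c j.+1) ->
  vnorm v0 = 1 ->
  (2 <= grade (blockA m b c s) v0)%N ->
  (exists i : 'I_(2 * m + b), (i./2 == 0)%N && (v0 i 0 != 0)) ->
  let A := blockA m b c s in
  (aci_alpha A v0 : R^nat) @ \oo --> (c 0%N : R) /\
  (aci_beta A v0 : R^nat) @ \oo --> (c 0%N : R) /\
  (forall vstar, seq_accum_point (aci_v A v0) vstar ->
     (forall i : 'I_(2 * m + b), (i./2 != 0)%N -> vstar i 0 = 0) /\
     Num.sqrt (\sum_(i < 2 * m + b | (i./2 == 0)%N) vstar i 0 ^+ 2) = 1).
Proof.
move=> m_gt0 cs1 s_neq0 c0_gt0 c_incr v0_unit _ v0_head A.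
split; [exact: aci_alpha_cvg | split; [exact: aci_beta_cvg | exact: aci_accum_point]].
Qed.
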